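(* Let $\omega$ be a non-quasianalytic subadditive weight function, let $u\in\mathcal{S}'_\omega(\mathbb R^d)$, $\varphi\in\mathcal{S}_\omega(\mathbb R^d)\setminus\{0\}$, let $\Lambda=\alpha\mathbb Z^d\times\beta\mathbb Z^d$ with $\alpha,\beta>0$, and let $\Gamma\subseteq\mathbb R^{2d}\setminus\{0\}$ be an open conic set. Then $$\sup_{\sigma\in\Lambda\cap\Gamma}e^{\lambda\omega(\sigma)}|\langle u,\Pi(\sigma)\varphi\rangle|<+\infty\quad\forall\lambda>0$$ holds if and only if $$\sum_{\sigma\in\Lambda\cap\Gamma}e^{\lambda\omega(\sigma)}|\langle u,\Pi(\sigma)\varphi\rangle|^2<+\infty\quad\forall\lambda>0.$$
   Context: A non-quasianalytic subadditive weight function is a continuous increasing function $\omega:[0,+\infty)\to[0,+\infty)$ such that: ($\alpha$) $\omega(t_1+t_2)\le\omega(t_1)+\omega(t_2)$ for all $t_1,t_2\ge0$; ($\beta$) $\int_1^{+\infty}\omega(t)t^{-2}\,dt<+\infty$; ($\gamma$) there exist $a\in\mathbb R$, $b>0$ with $\omega(t)\ge a+b\log(1+t)$ for all $t\ge0$; ($\delta$) $\varphi(t):=\omega(e^t)$ is convex. For $\zeta$ in $\mathbb R^n$ or $\mathbb C^n$ one writes $\omega(\zeta):=\omega(|\zeta|)$ with $|\cdot|$ the Euclidean norm. The space $\mathcal{S}_\omega(\mathbb R^d)$ is the set of Schwartz functions $f$ such that for all $\lambda>0$ and $\alpha\in\mathbb N_0^d$, $\sup_x|D^\alpha f(x)|e^{\lambda\omega(x)}<\infty$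 and $\sup_\xi|D^\alpha\hat f(\xi)|e^{\lambda\omega(\xi)}<\infty$, where $\hat f(\xi)=\int f(x)e^{-ix\cdot\xi}dx$; $\mathcal{S}'_\omega(\mathbb R^d)$ is its strong dual, with the duality $\langle\cdot,\cdot\rangle$ conjugate-linear in the second argument (extending the $L^2$ inner product). For $z=(x,\xi)\in\mathbb R^{2d}$, $\Pi(z)f(t)=e^{it\cdot\xi}f(t-x)$. *)

From mathcomp Require Import all_boot all_order all_algebra.
From mathcomp Require Import all_classical all_reals all_analysis.
From mathcomp Require Import complex.

Set Implicit Arguments.
Unset Strict Implicit.
Unset Printing Implicit Defensive.

Import Order.TTheory GRing.Theory Num.Theory numFieldNormedType.Exports.
Local Open Scope classical_set_scope.
Local Open Scope ring_scope.

Section Defs.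
Variable R : realType.
Local Notation C := R[i].
Local Notation vec d := 'rV[R]_d.

Definition cmod (z : C) : R := Num.sqrt (complex.Re z ^+ 2 + complex.Im z ^+ 2).

Definition dotp d (x y : vec d) : R := \sum_(j < d) x 0 j * y 0 j.
Definition enorm d (x : vec d) : R := Num.sqrt (dotp x x).
Definition enorm2 d (z : vec d * vec d) : R :=
  Num.sqrt (dotp z.1 z.1 + dotp z.2 z.2).

Definition weight_function (om : R -> R) : Prop :=
  {within [set t : R | 0 <= t], continuous om} /\
  (forall t, 0 <= t -> 0 <= om t) /\
  (forall s t, 0 <= s -> s <= t -> om s <= om t) /\
  (forall s t, 0 <= s -> 0 <= t -> om (s + t) <= om s + om t) /\
  (\int[lebesgue_measure]_(t in `[1%R, +oo[%classic) ((om t / t ^+ 2)%:E)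
     < +oo)%E /\
  (exists a b : R, 0 < b /\ forall t, 0 <= t -> a + b * ln (1 + t) <= om t) /\
  (forall s t th : R, 0 <= th -> th <= 1 ->
     om (expR (th * s + (1 - th) * t)) <= th * om (expR s) + (1 - th) * om (expR t)).

Definition pder d (j : 'I_d) (g : vec d -> R) : vec d -> R :=
  fun x => 'D_(delta_mx 0 j) g x.

Definition Dseq d (s : seq 'I_d) (g : vec d -> R) : vec d -> R :=
  foldr (@pder d) g s.

Definition smooth d (g : vec d -> R) : Prop :=
  forall s : seq 'I_d,
    continuous (Dseq s g) /\
    forall (j : 'I_d) (x : vec d), derivable (Dseq s g) x (delta_mx 0 j).

Definition Dmulti d (al : 'I_d -> nat) (g : vec d -> R) : vec d -> R :=
  Dseq (flatten [seq nseq (al j) j | j <- enum 'I_d]) g.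

Definition ReF d (f : vec d -> C) : vec d -> R := fun x => complex.Re (f x).
Definition ImF d (f : vec d -> C) : vec d -> R := fun x => complex.Im (f x).

Definition Dc d (al : 'I_d -> nat) (f : vec d -> C) : vec d -> C :=
  fun x => Complex (Dmulti al (ReF f) x) (Dmulti al (ImF f) x).

Definition monom d (be : 'I_d -> nat) (x : vec d) : R :=
  \prod_(j < d) x 0 j ^+ be j.

Definition schwartz d (f : vec d -> C) : Prop :=
  smooth (ReF f) /\ smooth (ImF f) /\
  forall al be : 'I_d -> nat, exists M : R, forall x,
    `|monom be x| * cmod (Dc al f x) <= M.

(* Lebesgue integral over R^d, computed as an iterated integral
   (equal to the Lebesgue integral on R^d for integrable functions, Fubini) *)
Fixpoint intRd (d : nat) : (vec d -> R) -> R :=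
  match d return (vec d -> R) -> R with
  | 0 => fun F => F 0
  | d'.+1 => fun F =>
      Rintegral lebesgue_measure setT
        (fun t : R => intRd (fun y : vec d' => F (row_mx (const_mx t : 'rV[R]_1) y : 'rV[R]_(1 + d'))))
  end.

Definition fourier d (f : vec d -> C) : vec d -> C :=
  fun xi => Complex
    (intRd (fun x => ReF f x * cos (dotp x xi) + ImF f x * sin (dotp x xi)))
    (intRd (fun x => ImF f x * cos (dotp x xi) - ReF f x * sin (dotp x xi))).

Definition in_Sw (om : R -> R) d (f : vec d -> C) : Prop :=
  schwartz f /\
  forall lam : R, 0 < lam -> forall al : 'I_d -> nat,
    (exists M : R, forall x, cmod (Dc al f x) * expR (lam * om (enorm x)) <= M) /\
    (exists M : R, forall xi,
        cmod (Dc al (fourier f) xi) * expR (lam * om (enorm xi)) <= M).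

(* the dual S'_omega(R^d): continuous functionals u, with
   <u, f> := u f conjugate-linear in f.  Continuity is w.r.t. the
   Frechet topology of S_omega given by the seminorms
   sup_{|al|<=N} (sup_x |D^al f| e^{lam om} + sup_xi |D^al fhat| e^{lam om}). *)
Definition in_Sw_dual (om : R -> R) d (u : (vec d -> C) -> C) : Prop :=
  (forall f g, in_Sw om f -> in_Sw om g -> u (fun x => f x + g x) = u f + u g) /\
  (forall (c : C) f, in_Sw om f -> u (fun x => c * f x) = conjc c * u f) /\
  exists (K lam : R) (N : nat), 0 < K /\ 0 < lam /\
    forall f, in_Sw om f -> forall M : R,
      (forall al : 'I_d -> nat, (\sum_(j < d) al j <= N)%N ->
         (forall x, cmod (Dc al f x) * expR (lam * om (enorm x)) <= M) /\
         (forall xi, cmod (Dc al (fourier f) xi) * expR (lam * om (enorm xi)) <= M)) ->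
      cmod (u f) <= K * M.

Definition tfshift d (z : vec d * vec d) (f : vec d -> C) : vec d -> C :=
  fun t => Complex (cos (dotp t z.2)) (sin (dotp t z.2)) * f (t - z.1).

Definition open_conic d (G : set (vec d * vec d)) : Prop :=
  open G /\ ~ G (0, 0) /\
  forall z, G z -> forall t : R, 0 < t -> G (t *: z.1, t *: z.2).

Definition latpt d (a b : R) (k l : 'rV[int]_d) : vec d * vec d :=
  (a *: map_mx (fun n : int => n%:~R) k, b *: map_mx (fun n : int => n%:~R) l).

End Defs.

From mathcomp Require Import all_boot all_order all_algebra.
From mathcomp Require Import all_classical all_reals all_analysis.
From mathcomp Require Import complex.
From mathcomp Require Import ring lra zify.

(* Only the lower bound (gamma) of the weight matters, and the coefficients
   <u, Pi(sigma) phi> enter only as nonnegative numbers c(sigma).  A family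
   whose squares are summable is bounded, which gives one direction (at 2 lam).
   Conversely, (gamma) gives e^{-nu om(t)} <= C (1 + t)^{-4d} for nu = 4d / b,
   so the bound at (lam + nu) / 2 dominates e^{lam om(sigma)} c(sigma)^2 by a
   multiple of prod_i 1 / ((n_i + 1)(n_i + 2)), where the n_i are the 2d
   coordinates of sigma coded into nat; these weights have total sum <= 1. *)

Import Order.TTheory GRing.Theory Num.Theory.
Local Open Scope classical_set_scope.
Local Open Scope ring_scope.
Set Implicit Arguments.
Unset Strict Implicit.

Definition zigzag (n : int) : nat :=
  match n with Posz m => m.*2 | Negz m => m.*2.+1 end.

Lemma zigzag_inj : injective zigzag.
Proof.
case=> m [] n /=.
- by move/(congr1 half); rewrite !doubleK => ->.
- by move/(congr1 odd); rewrite /= !odd_double.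
- by move/(congr1 odd); rewrite /= !odd_double.
- by move=> [] /(congr1 half); rewrite !doubleK => ->.
Qed.

Section InversePronic.
Variable R : realFieldType.

Definition inv_pronic (i : nat) : R := ((i.+1 * i.+2)%:R)^-1.

Lemma inv_pronic_gt0 i : 0 < inv_pronic i.
Proof. by rewrite invr_gt0 ltr0n muln_gt0. Qed.

Lemma sum_inv_pronic n : \sum_(i < n) inv_pronic i = 1 - (n.+1%:R)^-1.
Proof.
elim: n => [|n IH]; first by rewrite big_ord0 invr1 subrr.
rewrite big_ord_recr /= IH /inv_pronic natrM -addrA; congr (_ + _).
rewrite -[n.+2]addn1 -[n.+1]addn1 !natrD.
have n_ge0 : (0 : R) <= n%:R by rewrite ler0n.
by field; apply/andP; split; apply/negP => /eqP; lra.
Qed.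

Lemma sum_inv_pronic_le1 n : \sum_(i < n) inv_pronic i <= 1.
Proof. by rewrite sum_inv_pronic lerBlDr lerDl invr_ge0 ler0n. Qed.

Lemma sum_uniq_le_sum (J : finType) (r : seq J) (F : J -> R) :
  uniq r -> (forall y, 0 <= F y) -> \sum_(y <- r) F y <= \sum_y F y.
Proof.
move=> r_uniq F_ge0; rewrite (big_uniq _ r_uniq) [X in _ <= X](bigID (mem r)) /=.
by rewrite lerDl sumr_ge0.
Qed.

(* Truncating the finitely many functions of [s] to a common bound [N] reduces
   the claim to the full sum over [{ffun J -> 'I_N.+1}], which factorises. *)
Lemma sum_prod_inv_pronic_le1 (J : finType) (s : seq {ffun J -> nat}) :
  uniq s -> \sum_(f <- s) \prod_j inv_pronic (f j) <= 1.
Proof.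
move=> s_uniq; set N := (\sum_(f <- s) \sum_j f j)%N.
have f_lt (f : {ffun J -> nat}) j : f \in s -> (f j < N.+1)%N.
  move=> fs; rewrite ltnS /N (bigD1_seq f) //= (bigD1 j) //= -addnA.
  exact: leq_addr.
pose trunc (f : {ffun J -> nat}) : {ffun J -> 'I_N.+1} := [ffun j => inord (f j)].
have truncK f j : f \in s -> val (trunc f j) = f j.
  by move=> fs; rewrite ffunE /= inordK ?f_lt.
pose F (g : {ffun J -> 'I_N.+1}) := \prod_j inv_pronic (g j).
have F_ge0 g : 0 <= F g by apply: prodr_ge0 => j _; exact/ltW/inv_pronic_gt0.
rewrite (eq_big_seq (F \o trunc)); last first.
  by move=> f fs; apply: eq_bigr => j _ /=; rewrite truncK.
rewrite -(big_map trunc xpredT F).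
have trunc_uniq : uniq (map trunc s).
  rewrite map_inj_in_uniq // => f g fs gs /ffunP e; apply/ffunP => j.
  by rewrite -(truncK f) // -(truncK g) // e.
apply: le_trans (sum_uniq_le_sum trunc_uniq F_ge0) _.
rewrite /F -(bigA_distr_bigA (fun _ (i : 'I_N.+1) => inv_pronic i)) prodr_const.
by rewrite exprn_ile1 ?sum_inv_pronic_le1 // sumr_ge0 // => i _; exact/ltW/inv_pronic_gt0.
Qed.

Lemma zigzag_le (n : int) : ((zigzag n).+2%:R : R) <= 2 * (`|n%:~R : R| + 1).
Proof.
case: n => m /=.
  rewrite -pmulrn ger0_norm ?ler0n // -addn2 -muln2 natrD natrM.
  have : (0 : R) <= m%:R by rewrite ler0n.
  lra.
have -> : ((Negz m)%:~R : R) = - m.+1%:R by rewrite NegzE mulrNz.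
rewrite normrN ger0_norm ?ler0n // -addn3 -muln2 -[m.+1]addn1 !natrD natrM.
have : (0 : R) <= m%:R by rewrite ler0n.
lra.
Qed.

Lemma inv_inv_pronic_zigzag_le (c t : R) (n : int) :
  0 < c <= 1 -> c * `|n%:~R : R| <= t ->
  (inv_pronic (zigzag n))^-1 <= (2 / c * (1 + t)) ^+ 2.
Proof.
move=> /andP[c_gt0 c_le1]; rewrite /inv_pronic invrK.
have := zigzag_le n; have := normr_ge0 (n%:~R : R).
move: `|_| (zigzag n) => y m y_ge0 m_le cy_le.
have m_ge0 : 0 <= m%:R :> R by rewrite ler0n.
rewrite -addn2 natrD in m_le.
have -> : (m.+1 * m.+2)%:R = (m%:R + 1) * (m%:R + 2) :> R.
  by rewrite natrM -[m.+2]addn2 -[m.+1]addn1 !natrD.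
apply: le_trans (_ : (2 * (y + 1)) ^+ 2 <= _); first by nra.
have c_ge0 : 0 <= c := ltW c_gt0.
have t_ge0 : 0 <= t by apply: le_trans cy_le; rewrite mulr_ge0.
rewrite ler_pXn2r ?nnegrE ?mulr_ge0 ?invr_ge0 ?addr_ge0 //.
by rewrite mulrAC ler_pdivlMr //; nra.
Qed.

End InversePronic.

Definition lattice_code d (kl : 'rV[int]_d * 'rV[int]_d) : {ffun 'I_d + 'I_d -> nat} :=
  [ffun i => zigzag (match i with inl j => kl.1 0 j | inr j => kl.2 0 j end)].

Lemma lattice_code_inj d : injective (@lattice_code d).
Proof.
move=> [k1 l1] [k2 l2] /ffunP e; congr pair; apply/rowP => j.
  by move: (e (inl j)); rewrite !ffunE => /zigzag_inj.
by move: (e (inr j)); rewrite !ffunE => /zigzag_inj.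
Qed.

Section LatticeSums.
Variable R : realType.

Lemma enorm2_ge_fst d (z : 'rV[R]_d * 'rV[R]_d) j : `|z.1 0 j| <= enorm2 z.
Proof.
rewrite /enorm2 -sqrtr_sqr ler_wsqrtr // /dotp (bigD1 j) //= -addrA lerDl.
by rewrite addr_ge0 // sumr_ge0 // => i _; rewrite -expr2 sqr_ge0.
Qed.

Lemma enorm2_ge_snd d (z : 'rV[R]_d * 'rV[R]_d) j : `|z.2 0 j| <= enorm2 z.
Proof.
rewrite /enorm2 -sqrtr_sqr ler_wsqrtr // /dotp [X in _ <= X]addrC (bigD1 j) //=.
by rewrite -addrA lerDl addr_ge0 // sumr_ge0 // => i _; rewrite -expr2 sqr_ge0.
Qed.

Definition lattice_wt d (kl : 'rV[int]_d * 'rV[int]_d) : R :=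
  \prod_i inv_pronic R (lattice_code kl i).

Lemma lattice_wt_gt0 d (kl : 'rV[int]_d * 'rV[int]_d) : 0 < lattice_wt kl.
Proof. by apply: prodr_gt0 => i _; exact: inv_pronic_gt0. Qed.

Lemma sum_lattice_wt_le1 d (s : seq ('rV[int]_d * 'rV[int]_d)) :
  uniq s -> \sum_(kl <- s) lattice_wt kl <= 1.
Proof.
move=> s_uniq.
rewrite -(big_map (@lattice_code d) xpredT (fun f => \prod_i inv_pronic R (f i))).
by apply: sum_prod_inv_pronic_le1; rewrite map_inj_uniq //; exact: lattice_code_inj.
Qed.

Lemma lattice_wt_inv_le d (a b c : R) (kl : 'rV[int]_d * 'rV[int]_d) :
  0 < c <= 1 -> c <= a -> c <= b ->
  (lattice_wt kl)^-1 <= (2 / c * (1 + enorm2 (latpt a b kl.1 kl.2))) ^+ (4 * d).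
Proof.
move=> c01 ca cb; set t := enorm2 _.
have c_ge0 : 0 <= c by case/andP: c01 => /ltW.
have coord_le (x : R) (m : int) : c <= x -> `|x * m%:~R| <= t -> c * `|m%:~R : R| <= t.
  move=> cx; apply: le_trans; rewrite normrM ger0_norm ?(le_trans c_ge0) //.
  by rewrite ler_wpM2r.
have -> : (4 * d = 2 * #|{: 'I_d + 'I_d}|)%N by rewrite card_sum card_ord; lia.
rewrite exprM -prodr_const /lattice_wt -prodfV; apply: ler_prod => -[] j _.
all: rewrite ffunE invr_ge0 ltW ?inv_pronic_gt0 //=; apply: inv_inv_pronic_zigzag_le c01 _.
  by apply: (coord_le a) => //; have := enorm2_ge_fst (latpt a b kl.1 kl.2) j; rewrite !mxE.
by apply: (coord_le b) => //; have := enorm2_ge_snd (latpt a b kl.1 kl.2) j; rewrite !mxE.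
Qed.

Lemma esum_le_dominated (T : choiceType) (S : set T) (f g : T -> R) (C : R) :
  0 <= C -> (forall x, S x -> f x <= C * g x) ->
  (forall s : seq T, uniq s -> \sum_(x <- s) g x <= 1) ->
  (\esum_(x in S) (f x)%:E <= C%:E)%E.
Proof.
move=> C_ge0 f_le g_sum; apply: ge_ereal_sup => _ [A [finA AS] <-].
rewrite fsbig_finite // sumEFin lee_fin.
apply: (@le_trans _ _ (\sum_(x <- finmap.enum_fset (fset_set A)) C * g x)).
  rewrite big_seq [X in _ <= X]big_seq; apply: ler_sum => x.
  by rewrite in_fset_set // inE => /AS /f_le.
by rewrite -mulr_sumr ler_piMr // g_sum // finmap.fset_uniq.
Qed.

Lemma esum_sqr_lt_pinfty_bounded (T : choiceType) (S : set T) (f : T -> R) :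
  (forall x, 0 <= f x) -> (\esum_(x in S) (f x ^+ 2)%:E < +oo)%E ->
  exists M, forall x, S x -> f x <= M.
Proof.
move=> f_ge0 sum_fin; exists (Num.sqrt (fine (\esum_(x in S) (f x ^+ 2)%:E))) => x Sx.
have sum_ge0 : (0 <= \esum_(x in S) (f x ^+ 2)%:E)%E.
  by apply: esum_ge0 => y _; rewrite lee_fin sqr_ge0.
have term_le : ((f x ^+ 2)%:E <= \esum_(x in S) (f x ^+ 2)%:E)%E.
  apply: esum_ge; exists [set x]; first by split; [exact: finite_set1 | move=> y ->].
  by rewrite fsbig_set1.
rewrite -(ger0_norm (f_ge0 x)) -sqrtr_sqr ler_wsqrtr //.
by rewrite -lee_fin fineK // ge0_fin_numE.
Qed.

Lemma weight_decay (om : R -> R) (a0 b0 t : R) (n : nat) :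
  0 < b0 -> 0 <= t -> a0 + b0 * ln (1 + t) <= om t ->
  expR (- (n%:R / b0 * om t)) * (1 + t) ^+ n <= expR (- (n%:R / b0 * a0)).
Proof.
move=> b0_gt0 t_ge0 om_ge; have t1_gt0 : 0 < 1 + t by lra.
have nu_ge0 : 0 <= n%:R / b0 by rewrite divr_ge0 ?ler0n ?ltW.
rewrite -ler_pdivlMr ?exprn_gt0 //.
apply: le_trans (_ : expR (- (n%:R / b0 * (a0 + b0 * ln (1 + t)))) <= _).
  by rewrite ler_expR lerN2 ler_wpM2l.
rewrite mulrDr opprD expRD ler_wpM2l ?expR_ge0 // mulrA divfK ?gt_eqF //.
by rewrite expRN expRM_natl lnK.
Qed.

Lemma lattice_esum_lt_pinfty d (om : R -> R) (a0 b0 a b : R)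
    (S : set ('rV[int]_d * 'rV[int]_d)) (c : 'rV[int]_d * 'rV[int]_d -> R) :
  0 < b0 -> (forall t, 0 <= t -> a0 + b0 * ln (1 + t) <= om t) ->
  0 < a -> 0 < b -> (forall kl, 0 <= c kl) ->
  (forall mu, 0 < mu -> exists M, forall kl, S kl ->
     expR (mu * om (enorm2 (latpt a b kl.1 kl.2))) * c kl <= M) ->
  forall lam, 0 < lam ->
  (\esum_(kl in S) (expR (lam * om (enorm2 (latpt a b kl.1 kl.2))) * c kl ^+ 2)%:E
     < +oo)%E.
Proof.
move=> b0_gt0 om_ge a_gt0 b_gt0 c_ge0 sup_bd lam lam_gt0.
pose n := (4 * d)%N; pose nu : R := n%:R / b0.
have nu_ge0 : 0 <= nu by rewrite divr_ge0 ?ler0n ?ltW.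
pose mu := (lam + nu) / 2.
have mu_gt0 : 0 < mu by rewrite divr_gt0 // ltr_wpDr.
have [M M_ge] := sup_bd mu mu_gt0.
pose cc := Num.min 1 (Num.min a b).
have cc01 : 0 < cc <= 1 by rewrite ge_min lexx !lt_min ltr01 a_gt0 b_gt0.
have cc_gt0 : 0 < cc by case/andP: cc01.
have cca : cc <= a by rewrite !ge_min lexx orbT.
have ccb : cc <= b by rewrite !ge_min lexx !orbT.
pose C := M ^+ 2 * expR (- (nu * a0)) * (2 / cc) ^+ n.
apply: (@le_lt_trans _ _ C%:E); last exact: ltry.
apply: (esum_le_dominated (g := @lattice_wt d)); last exact: sum_lattice_wt_le1.
  by apply: mulr_ge0; [apply: mulr_ge0|]; rewrite ?sqr_ge0 ?expR_ge0 ?exprn_ge0 ?divr_ge0 ?ltW.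
move=> kl Skl; set t := enorm2 _; set w := om t.
have t_ge0 : 0 <= t by exact: sqrtr_ge0.
have lam_split : expR (lam * w) * c kl ^+ 2 = (expR (mu * w) * c kl) ^+ 2 * expR (- (nu * w)).
  by rewrite exprMn -expRM_natl mulrAC -expRD /mu; congr (expR _ * _); field.
have wt_ge : 1 <= (2 / cc) ^+ n * (1 + t) ^+ n * lattice_wt kl.
  by rewrite -exprMn -ler_pdivrMr ?lattice_wt_gt0 // div1r lattice_wt_inv_le.
have sq_le : (expR (mu * w) * c kl) ^+ 2 <= M ^+ 2.
  have prod_ge0 : 0 <= expR (mu * w) * c kl by rewrite mulr_ge0 ?expR_ge0.
  have M_ge0 : 0 <= M := le_trans prod_ge0 (M_ge kl Skl).
  by rewrite ler_pXn2r ?nnegrE // M_ge.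
have decay_le : expR (- (nu * w)) <= (2 / cc) ^+ n * expR (- (nu * a0)) * lattice_wt kl.
  apply: le_trans (ler_peMr (expR_ge0 _) wt_ge) _.
  have -> : expR (- (nu * w)) * ((2 / cc) ^+ n * (1 + t) ^+ n * lattice_wt kl) =
    (2 / cc) ^+ n * (expR (- (nu * w)) * (1 + t) ^+ n) * lattice_wt kl by ring.
  rewrite ler_pM2r ?lattice_wt_gt0 // ler_pM2l ?exprn_gt0 ?divr_gt0 //.
  exact: weight_decay b0_gt0 t_ge0 (om_ge t t_ge0).
have -> : C * lattice_wt kl = M ^+ 2 * ((2 / cc) ^+ n * expR (- (nu * a0)) * lattice_wt kl).
  by rewrite /C; ring.
by rewrite lam_split ler_pM ?sqr_ge0 ?expR_ge0.
Qed.

End LatticeSums.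

Theorem lemma2p4 (R : realType) (d : nat) (om : R -> R)
  (u : ('rV[R]_d -> R[i]) -> R[i]) (phi : 'rV[R]_d -> R[i]) (a b : R)
  (G : set ('rV[R]_d * 'rV[R]_d)) :
  weight_function om ->
  in_Sw_dual om u ->
  in_Sw om phi -> phi <> (fun _ => 0) ->
  0 < a -> 0 < b ->
  open_conic G ->
  (forall lam : R, 0 < lam -> exists M : R,
     forall k l : 'rV[int]_d, G (latpt a b k l) ->
       expR (lam * om (enorm2 (latpt a b k l)))
         * cmod (u (tfshift (latpt a b k l) phi)) <= M)
  <->
  (forall lam : R, 0 < lam ->
     (\esum_(kl in [set kl : 'rV[int]_d * 'rV[int]_d | G (latpt a b kl.1 kl.2)])
        ((expR (lam * om (enorm2 (latpt a b kl.1 kl.2)))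
          * cmod (u (tfshift (latpt a b kl.1 kl.2) phi)) ^+ 2)%:E) < +oo)%E).
Proof.
move=> [_ [_ [_ [_ [_ [[a0 [b0 [b0_gt0 om_ge]]] _]]]]]] _ _ _ a_gt0 b_gt0 _.
have cmod_ge0 (z : R[i]) : 0 <= cmod z := sqrtr_ge0 _.
split=> [sup_bd | sum_fin] lam lam_gt0.
  apply: (lattice_esum_lt_pinfty b0_gt0 om_ge a_gt0 b_gt0) => // mu /sup_bd[M M_ge].
  by exists M => -[k l]; exact: M_ge.
pose f kl := expR (lam * om (enorm2 (latpt a b kl.1 kl.2)))
  * cmod (u (tfshift (latpt a b kl.1 kl.2) phi)).
have [||M M_ge] :=
  @esum_sqr_lt_pinfty_bounded R _ [set kl | G (latpt a b kl.1 kl.2)] f.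
- by move=> kl; rewrite mulr_ge0 ?expR_ge0.
- rewrite (eq_esum (b := fun kl => (expR (2 * lam * om (enorm2 (latpt a b kl.1 kl.2)))
      * cmod (u (tfshift (latpt a b kl.1 kl.2) phi)) ^+ 2)%:E)) ?sum_fin ?mulr_gt0 //.
  by move=> kl _; rewrite exprMn -expRM_natl mulrA.
- by exists M => k l; exact: (M_ge (k, l)).
Qed.
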